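(* Consider day-ahead prices $\boldsymbol{P}=(P_0,\dots,P_H)$ with $H\ge 2$, a storage of capacity $\kappa>0$ and efficiency $\eta\in(0,1]$, and the admissible bid vectors consisting of the zero vector and the vectors $\vec a(b,s)\in\mathbb{R}^{H+1}$ for hours $b<s$, with $a_b=\kappa/\eta$, $a_s=-\eta\kappa$ and $a_h=0$ otherwise. For a predictive distribution $\mathcal{F}$ of the prices, let $\boldsymbol F\sim\mathcal F$ and let $\mathcal{P}^{\vec a}_{\mathcal F}$ denote the distribution of the forecasted revenue $-\vec a^{\top}\boldsymbol F$. Let $\rho$ be any risk measure that depends on a revenue only through its distribution, and let the battery trading strategy choose $\vec a^*_{\mathcal F}\in\arg\max_{\vec a}\rho(\mathcal{P}^{\vec a}_{\mathcal F})$ (with a fixed tie-breaking rule), with realized revenue $-(\vec a^*_{\mathcal F})^{\top}\vec p$ for realized prices $\vec p$. Then there exist a true distribution $\mathcal F_1$ and a different forecast distribution $\mathcal F_2\neq\mathcal F_1$ such that $\rho(\mathcal{P}^{\vec a}_{\mathcal F_1})=\rho(\mathcal{P}^{\vec a}_{\mathcal F_2})$ for all admissible $\vec a$, so that the ranking of all bid pairs $(b,s)$ and the chosen optimal bid coincide. In particular, the score $S(\mathcal F,\vec p)=(\vec a^*_{\mathcal F})^{\top}\vec p$ (negative realized revenue) is not a strictly proper scoring rule.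
   Context: A scoring rule $S(\mathcal F,x)$ (lower is better) is proper if $\mathbb{E}_{x\sim\mathcal D}[S(\mathcal D,x)]\le\mathbb{E}_{x\sim\mathcal D}[S(\mathcal F,x)]$ for all forecasts $\mathcal F$ and true distributions $\mathcal D$, and strictly proper if equality holds only for $\mathcal F=\mathcal D$. *)

From HB Require Import structures.
From mathcomp Require Import all_boot all_order all_algebra.
From mathcomp Require Import all_classical all_reals all_analysis.
Set Implicit Arguments. Unset Strict Implicit. Unset Printing Implicit Defensive.
Import Order.TTheory GRing.Theory Num.Theory.
Local Open Scope ring_scope.

(* Price vectors (P_0,...,P_H) are (H.+1)-tuples of reals; the tuple type
   carries the product sigma-algebra generated by the coordinate maps. *)
Notation prices H R := ((H.+1).-tuple R).

Definition pairbid (H : nat) := {bs : 'I_(H.+1) * 'I_(H.+1) | (bs.1 < bs.2)%N}.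

(* Admissible bids: None is the zero vector, Some (b,s) is a(b,s). *)
Definition bid (H : nat) := option (pairbid H).

Definition avec (R : realType) (H : nat) (kappa eta : R) (a : bid H)
  : 'I_(H.+1) -> R :=
  fun h => match a with
           | None => 0
           | Some bs => let b := (sval bs).1 in let s := (sval bs).2 in
               if h == b then kappa / eta
               else if h == s then - (eta * kappa) else 0
           end.

Definition dotp (R : realType) (H : nat) (kappa eta : R) (a : bid H)
  (p : prices H R) : R :=
  \sum_(h < H.+1) avec kappa eta a h * tnth p h.

Definition revenue (R : realType) (H : nat) (kappa eta : R) (a : bid H)
  (p : prices H R) : R := - dotp kappa eta a p.

Definition revdist (R : realType) (H : nat) (kappa eta : R)
  (F : probability (prices H R) R) (a : bid H) : set R -> \bar R :=
  pushforward F (revenue kappa eta a).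

(* A (fixed) tie-breaking argmax selection on the finite set of bids. *)
Definition is_argmax_selection (R : realType) (H : nat)
  (sel : (bid H -> \bar R) -> bid H) : Prop :=
  forall f : bid H -> \bar R, forall a : bid H, (f a <= f (sel f))%E.

Definition astar (R : realType) (H : nat) (kappa eta : R)
  (rho : (set R -> \bar R) -> \bar R) (sel : (bid H -> \bar R) -> bid H)
  (F : probability (prices H R) R) : bid H :=
  sel (fun a => rho (revdist kappa eta F a)).

Definition battery_score (R : realType) (H : nat) (kappa eta : R)
  (rho : (set R -> \bar R) -> \bar R) (sel : (bid H -> \bar R) -> bid H)
  (F : probability (prices H R) R) (p : prices H R) : R :=
  dotp kappa eta (astar kappa eta rho sel F) p.

(* Strict propriety (lower is better) over all probability distributions
   on price vectors. *)
Definition strictly_proper (R : realType) (H : nat)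
  (S : probability (prices H R) R -> prices H R -> R) : Prop :=
  forall D F : probability (prices H R) R,
    (\int[D]_x (S D x)%:E <= \int[D]_x (S F x)%:E)%E /\
    ((\int[D]_x (S D x)%:E = \int[D]_x (S F x)%:E)%E ->
       (F : set (prices H R) -> \bar R) = D).

From HB Require Import structures.
From mathcomp Require Import all_boot all_order all_algebra.
From mathcomp Require Import all_classical all_reals all_analysis.
From mathcomp Require Import ring lra.
Set Implicit Arguments.
Unset Strict Implicit.
Unset Printing Implicit Defensive.
Import Order.TTheory GRing.Theory Num.Theory.
Local Open Scope ring_scope.
Local Open Scope classical_set_scope.

(* Let u be the last unit vector and z := (eta^2, ..., eta^2, 1).  Every bid
   a(b, s) is orthogonal to u (when s < H) or to z (when s = H, since
   kappa/eta * eta^2 = eta * kappa).  Hence for every admissible a the two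
   revenues -a.u and -a.z contain a zero, and the revenue distributions of
   F1 = (delta_0 + delta_(u+z))/2 and F2 = (delta_u + delta_z)/2 coincide,
   although F1 <> F2.  Any score depending on F only through these
   distributions then gives F1 and F2 the same expected score. *)

Section half_mixture.
Context d (T : measurableType d) (R : realType) (x y : T).

Definition half_mixture : set T -> \bar R :=
  measure_add (mscale (2^-1)%:nng \d_x) (mscale (2^-1)%:nng \d_y).

Let half_mixture0 : half_mixture set0 = 0%E. Proof. exact: measure0. Qed.
Let half_mixture_ge0 A : (0 <= half_mixture A)%E. Proof. exact: measure_ge0. Qed.
Let half_mixture_sigma_additive : semi_sigma_additive half_mixture.
Proof. exact: measure_semi_sigma_additive. Qed.
HB.instance Definition _ := isMeasure.Build _ _ _ half_mixture
  half_mixture0 half_mixture_ge0 half_mixture_sigma_additive.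

Lemma half_mixtureE A :
  half_mixture A = ((2^-1)%:E * \d_x A + (2^-1)%:E * \d_y A)%E.
Proof. by rewrite /half_mixture measure_addE. Qed.

Let half_mixtureT : half_mixture setT = 1%E.
Proof. by rewrite half_mixtureE !diracT -!EFinM -EFinD; congr EFin; lra. Qed.
HB.instance Definition _ := Measure_isProbability.Build _ _ _ half_mixture
  half_mixtureT.

End half_mixture.

Section half_mixture_theory.
Context d (T : measurableType d) (R : realType).

Lemma half_mixtureC (x y : T) :
  half_mixture R x y = half_mixture R y x.
Proof. by apply/funext => A; rewrite !half_mixtureE addeC. Qed.

Lemma pushforward_half_mixture d' (T' : measurableType d') (f : T -> T')
    (x y : T) :
  pushforward (half_mixture R x y) f = half_mixture R (f x) (f y).
Proof. by apply/funext => A; rewrite /pushforward !half_mixtureE !diracE. Qed.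

Lemma half_mixture_neq (x y u v : T) : x <> u -> x <> v ->
  half_mixture R x y <> half_mixture R u v.
Proof.
move=> xu xv /(congr1 (fun m => m [set x])).
rewrite !half_mixtureE !diracE (@mem_set _ [set x] x erefl).
rewrite (@memNset _ [set x] u (nesym xu)) (@memNset _ [set x] v (nesym xv)).
by case: (y \in _); rewrite -!EFinM -!EFinD => -[]; lra.
Qed.

End half_mixture_theory.

Section bids.
Variables (R : realType) (H : nat) (kappa eta : R).

Definition prices0 : prices H R := [tuple 0 | i < H.+1].

Definition pricesD (p q : prices H R) : prices H R :=
  [tuple tnth p i + tnth q i | i < H.+1].

Lemma prices0_neq (p : prices H R) i : tnth p i != 0 -> prices0 <> p.
Proof.
move=> /eqP pi_neq0 /(congr1 (fun t => tnth t i)).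
by rewrite tnth_mktuple => /esym.
Qed.

Lemma dotp0 a : dotp kappa eta a prices0 = 0.
Proof. by rewrite /dotp big1 // => i _; rewrite tnth_mktuple mulr0. Qed.

Lemma dotpD a p q :
  dotp kappa eta a (pricesD p q) = dotp kappa eta a p + dotp kappa eta a q.
Proof.
rewrite /dotp -big_split /=.
by apply: eq_bigr => i _; rewrite tnth_mktuple mulrDr.
Qed.

Lemma dotp_some (bs : pairbid H) p :
  dotp kappa eta (Some bs) p =
  kappa / eta * tnth p (sval bs).1 - eta * kappa * tnth p (sval bs).2.
Proof.
case: bs => [[b s] /= lt_bs].
have s_neq_b : s != b by rewrite gt_eqF.
rewrite /dotp (bigD1 b) //= eqxx (bigD1 s) //= (negbTE s_neq_b) eqxx.
rewrite big1 ?addr0 ?mulNr // => h /andP[/negbTE -> /negbTE ->].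
by rewrite mul0r.
Qed.

Definition last_unit : prices H R := [tuple (i == ord_max)%:R | i < H.+1].

Definition tilted : prices H R :=
  [tuple if i == ord_max then 1 else eta ^+ 2 | i < H.+1].

Lemma prices0_neq_last_unit : prices0 <> last_unit.
Proof. by apply: (prices0_neq (i := ord_max)); rewrite tnth_mktuple eqxx oner_eq0. Qed.

Lemma prices0_neq_tilted : prices0 <> tilted.
Proof. by apply: (prices0_neq (i := ord_max)); rewrite tnth_mktuple eqxx oner_eq0. Qed.

Lemma dotp_last_unit_or_tilted : eta != 0 -> forall a,
  dotp kappa eta a last_unit = 0 \/ dotp kappa eta a tilted = 0.
Proof.
move=> eta_neq0 [bs|]; last by left; rewrite /dotp big1 // => h _; rewrite mul0r.
rewrite !dotp_some /last_unit /tilted !tnth_mktuple.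
case: bs => [[b s] /= lt_bs].
have b_neq_max : b != ord_max.
  by rewrite -(inj_eq val_inj) /= neq_ltn (leq_trans lt_bs) // -ltnS.
rewrite (negbTE b_neq_max).
have [_|_] := eqVneq s ord_max; last by left; rewrite !mulr0 subr0.
by right; apply/eqP; rewrite subr_eq0 mulr1; apply/eqP; field.
Qed.

Lemma revdist_half_mixture_split (u z : prices H R) a :
  dotp kappa eta a u = 0 \/ dotp kappa eta a z = 0 ->
  revdist kappa eta (half_mixture R prices0 (pricesD u z)) a =
  revdist kappa eta (half_mixture R u z) a.
Proof.
rewrite /revdist !pushforward_half_mixture /revenue dotpD dotp0 oppr0.
by case=> ->; rewrite oppr0 ?add0r ?addr0 // half_mixtureC.
Qed.

Lemma astar_eq_of_revdist rho sel (F1 F2 : probability (prices H R) R) :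
  (forall a, revdist kappa eta F1 a = revdist kappa eta F2 a) ->
  astar kappa eta rho sel F1 = astar kappa eta rho sel F2.
Proof. by move=> F12; rewrite /astar; congr sel; apply/funext => a; rewrite F12. Qed.

Lemma not_strictly_proper_battery_score rho sel
    (F1 F2 : probability (prices H R) R) :
  (F1 : set (prices H R) -> \bar R) <> F2 ->
  astar kappa eta rho sel F1 = astar kappa eta rho sel F2 ->
  ~ strictly_proper (battery_score kappa eta rho sel).
Proof.
move=> F1_neq_F2 astar12 /(_ F1 F2) [_ score_eq_neq].
apply/F1_neq_F2/esym/score_eq_neq.
by congr (integral _ _ _); apply/funext => p; rewrite /battery_score astar12.
Qed.

End bids.
Arguments prices0 {R H}.
Arguments last_unit {R H}.
Arguments tilted {R H} eta.

Theorem proposition2 (R : realType) (H : nat) (kappa eta : R)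
  (hH : (2 <= H)%N) (hkappa : 0 < kappa) (heta0 : 0 < eta) (heta1 : eta <= 1)
  (rho : (set R -> \bar R) -> \bar R)
  (sel : (bid H -> \bar R) -> bid H) (hsel : is_argmax_selection sel) :
  (exists F1 F2 : probability (prices H R) R,
     (F1 : set (prices H R) -> \bar R) <> F2 /\
     (forall a : bid H,
        rho (revdist kappa eta F1 a) = rho (revdist kappa eta F2 a)) /\
     astar kappa eta rho sel F1 = astar kappa eta rho sel F2) /\
  ~ strictly_proper (battery_score kappa eta rho sel).
Proof.
pose u : prices H R := last_unit.
pose z : prices H R := tilted eta.
pose F1 := half_mixture R prices0 (pricesD u z).
pose F2 := half_mixture R u z.
have revdist12 a : revdist kappa eta F1 a = revdist kappa eta F2 a.
  exact/revdist_half_mixture_split/dotp_last_unit_or_tilted/lt0r_neq0.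
have F1_neq_F2 : (F1 : set (prices H R) -> \bar R) <> F2.
  apply: half_mixture_neq; [exact: prices0_neq_last_unit |
                             exact: prices0_neq_tilted].
have astar12 := astar_eq_of_revdist rho sel revdist12.
split; last exact: not_strictly_proper_battery_score F1_neq_F2 astar12.
exists F1, F2; split; first exact: F1_neq_F2.
by split; [move=> a; rewrite revdist12 | exact: astar12].
Qed.
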